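(* Let $X$ be a quasi-Polish space and $E$ an equivalence relation on $X$ such that the $E$-saturation of every open set is open. Then one may adjoin countably many $E$-invariant closed sets to the topology of $X$ so that, for the resulting topology, $X/\!/E$ has the same elements (the same $\approx_E$-classes) as before but is Polish.
   Context: For a topology on $X$, $x\approx_E y$ iff $\overline{[x]_E}=\overline{[y]_E}$, and $X/\!/E:=X/{\approx_E}$ with the quotient topology. A quasi-Polish space is a space homeomorphic to a $\mathbf\Pi^0_2$ subset of $\mathbb S^{\mathbb N}$, where $\mathbb S$ is the Sierpiński space and $\mathbf\Pi^0_2$ means a countable intersection of sets $U\cup F$ with $U$ open and $F$ closed. *)

From Stdlib Require Import Reals List Classical.
Open Scope R_scope.

Definition opfam (X : Type) := (X -> Prop) -> Prop.

Definition complementS {X : Type} (A : X -> Prop) : X -> Prop := fun x => ~ A x.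

Definition is_topology {X : Type} (T : opfam X) : Prop :=
  T (fun _ => True) /\
  (forall U V, T U -> T V -> T (fun x => U x /\ V x)) /\
  (forall (I : Type) (U : I -> X -> Prop), (forall i, T (U i)) ->
      T (fun x => exists i, U i x)).

Definition gen_top {X : Type} (S : opfam X) : opfam X :=
  fun U => forall T : opfam X, is_topology T -> (forall V, S V -> T V) -> T U.

Definition closureT {X : Type} (tau : opfam X) (A : X -> Prop) : X -> Prop :=
  fun x => forall U, tau U -> U x -> exists y, U y /\ A y.

Definition saturation {X : Type} (E : X -> X -> Prop) (A : X -> Prop) : X -> Prop :=
  fun y => exists x, A x /\ E x y.

Definition equivalence_rel {X : Type} (E : X -> X -> Prop) : Prop :=
  (forall x, E x x) /\ (forall x y, E x y -> E y x) /\
  (forall x y z, E x y -> E y z -> E x z).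

Definition approxE {X : Type} (tau : opfam X) (E : X -> X -> Prop) (x y : X) : Prop :=
  closureT tau (E x) = closureT tau (E y).

Definition approx_class {X : Type} (tau : opfam X) (E : X -> X -> Prop) (x : X)
  : X -> Prop := fun y => approxE tau E x y.

(* Carrier of X//E: the ≈_E-classes. *)
Definition qtype {X : Type} (tau : opfam X) (E : X -> X -> Prop) : Type :=
  { A : X -> Prop | exists x, A = approx_class tau E x }.

Definition qproj {X : Type} (tau : opfam X) (E : X -> X -> Prop) (x : X)
  : qtype tau E := exist _ (approx_class tau E x) (ex_intro _ x eq_refl).

Definition quot_top {X : Type} (tau : opfam X) (E : X -> X -> Prop)
  : opfam (qtype tau E) :=
  fun U => tau (fun x => U (qproj tau E x)).

Definition is_metric {T : Type} (d : T -> T -> R) : Prop :=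
  (forall x y, 0 <= d x y) /\ (forall x y, d x y = 0 <-> x = y) /\
  (forall x y, d x y = d y x) /\ (forall x y z, d x z <= d x y + d y z).

Definition metric_open {T : Type} (d : T -> T -> R) (U : T -> Prop) : Prop :=
  forall x, U x -> exists eps, 0 < eps /\ (forall y, d x y < eps -> U y).

Definition metric_complete {T : Type} (d : T -> T -> R) : Prop :=
  forall s : nat -> T,
    (forall eps, 0 < eps -> exists N, forall m n, (N <= m)%nat -> (N <= n)%nat ->
        d (s m) (s n) < eps) ->
    exists l, forall eps, 0 < eps -> exists N, forall n, (N <= n)%nat -> d (s n) l < eps.

Definition countable_set {T : Type} (D : T -> Prop) : Prop :=
  exists f : nat -> option T, forall x, D x -> exists n, f n = Some x.

Definition separable {T : Type} (sigma : opfam T) : Prop :=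
  exists D : T -> Prop, countable_set D /\
    forall U, sigma U -> (exists x, U x) -> exists x, U x /\ D x.

Definition polish {T : Type} (sigma : opfam T) : Prop :=
  separable sigma /\
  exists d : T -> T -> R, is_metric d /\ metric_complete d /\
    (forall U, sigma U <-> metric_open d U).

(* Sierpinski space S = {false, true} with open set {true}; S^N with product topology. *)
Definition sier_open (U : (nat -> bool) -> Prop) : Prop :=
  forall x, U x -> exists F : list nat,
    (forall i, In i F -> x i = true) /\
    (forall y, (forall i, In i F -> y i = true) -> U y).

Definition sier_Pi02 (A : (nat -> bool) -> Prop) : Prop :=
  exists (U F : nat -> (nat -> bool) -> Prop),
    (forall n, sier_open (U n)) /\ (forall n, sier_open (complementS (F n))) /\
    (forall x, A x <-> forall n, U n x \/ F n x).

Definition quasi_polish {X : Type} (tau : opfam X) : Prop :=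
  exists (A : (nat -> bool) -> Prop) (h : X -> (nat -> bool)),
    sier_Pi02 A /\
    (forall x y, h x = h y -> x = y) /\
    (forall a, A a <-> exists x, h x = a) /\
    (forall V, tau V <-> exists U, sier_open U /\ forall x, V x <-> U (h x)).

(* Let B_G (G a finite set of indices) range over the basic open sets of X pulled back from
   the Sierpinski cube, and call P(x) = {G | x lies in [B_G]_E} the pattern of x. Since
   saturations of open sets are open, the sets [B_G]_E are the invariant open sets that
   matter: x ≈_E y iff P(x) = P(y), both for the original topology and after adjoining the
   complements of all [B_G]_E as closed sets, which makes every [B_G]_E clopen. So X//E is
   the set of patterns of points, topologised as a subspace of Cantor space.

   The patterns of points are exactly the "admissible" sets of indices, those closed under the
   requirements coming from the Pi^0_2 presentation of X: given an admissible P, a sequence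
   of growing finite masks meeting every requirement in turn converges to a point of the
   Pi^0_2 set whose pattern is P. Recording, next to the bits of P, the least witness of each
   triggered requirement codes X//E into Baire space continuously, injectively and with
   closed image, so the first-difference metric pulled back along this code is complete,
   separable and induces the quotient topology. *)

From Stdlib Require Import Reals List Classical.
From Stdlib Require Import Arith Lia Lra Cantor Wf_nat ClassicalEpsilon
  PropExtensionality FunctionalExtensionality.

Lemma ex_least_nat (P : nat -> Prop) :
  (exists n, P n) -> exists n, P n /\ forall m, (m < n)%nat -> ~ P m.
Proof.
  intro Hex.
  destruct (dec_inh_nat_subset_has_unique_least_element P (fun n => classic (P n)) Hex)
    as [n [[Pn Hleast] _]].
  exists n. split; [exact Pn|]. intros m Hm Pm. specialize (Hleast m Pm). lia.
Qed.

Lemma inv_succ_pos (p : nat) : 0 < / INR (S p).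
Proof. apply Rinv_0_lt_compat, lt_0_INR. lia. Qed.

Lemma inv_succ_lt (p q : nat) : (p < q)%nat -> / INR (S q) < / INR (S p).
Proof.
  intro H. apply Rinv_lt_contravar.
  - apply Rmult_lt_0_compat; apply lt_0_INR; lia.
  - apply lt_INR. lia.
Qed.

Lemma inv_succ_le (p q : nat) : (p <= q)%nat -> / INR (S q) <= / INR (S p).
Proof. intro H. apply Rinv_le_contravar; [apply lt_0_INR; lia | apply le_INR; lia]. Qed.

(** * The first-difference ultrametric on Baire space *)

Definition first_diff (a b : nat -> nat) (p : nat) : Prop :=
  a p <> b p /\ forall i, (i < p)%nat -> a i = b i.

Definition baire_dist (a b : nat -> nat) : R :=
  match excluded_middle_informative (exists p, first_diff a b p) with
  | left _ => / INR (S (epsilon (inhabits 0%nat) (first_diff a b)))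
  | right _ => 0
  end.

Lemma first_diff_unique a b p q : first_diff a b p -> first_diff a b q -> p = q.
Proof.
  intros [Hp Lp] [Hq Lq].
  destruct (lt_eq_lt_dec p q) as [[Hlt|Heq]|Hlt]; [| exact Heq |];
    exfalso; [apply Hp, Lq | apply Hq, Lp]; exact Hlt.
Qed.

Lemma baire_dist_cases a b :
  (baire_dist a b = 0 /\ forall i, a i = b i) \/
  (exists p, baire_dist a b = / INR (S p) /\ first_diff a b p).
Proof.
  unfold baire_dist.
  destruct (excluded_middle_informative (exists p, first_diff a b p)) as [Hex|Hno].
  - right. eexists. split; [reflexivity|]. apply epsilon_spec, Hex.
  - left. split; [reflexivity|]. intro i. apply NNPP. intro Hi.
    destruct (ex_least_nat (fun m => a m <> b m) (ex_intro _ i Hi)) as [p [Hp Hleast]].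
    apply Hno. exists p. split; [exact Hp|].
    intros m Hm. apply NNPP. exact (Hleast m Hm).
Qed.

Lemma baire_dist_ge0 a b : 0 <= baire_dist a b.
Proof.
  destruct (baire_dist_cases a b) as [[-> _]|[p [-> _]]]; [lra|].
  left. apply inv_succ_pos.
Qed.

Lemma baire_dist_eq0 a b : baire_dist a b = 0 <-> forall i, a i = b i.
Proof.
  destruct (baire_dist_cases a b) as [[-> Hall]|[p [-> [Hp _]]]].
  - tauto.
  - pose proof (inv_succ_pos p). split; [lra|]. intro Hall. contradiction (Hp (Hall p)).
Qed.

Lemma baire_dist_sym a b : baire_dist a b = baire_dist b a.
Proof.
  destruct (baire_dist_cases a b) as [[-> Hab]|[p [-> [Hp Lp]]]];
  destruct (baire_dist_cases b a) as [[-> Hba]|[q [-> [Hq Lq]]]]; try reflexivity.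
  - contradiction (Hq (eq_sym (Hab q))).
  - contradiction (Hp (eq_sym (Hba p))).
  - do 3 f_equal. apply (first_diff_unique a b); split; [exact Hp | exact Lp | |].
    + intro H. exact (Hq (eq_sym H)).
    + intros i Hi. symmetry. exact (Lq i Hi).
Qed.

Lemma baire_dist_ge a b p : a p <> b p -> / INR (S p) <= baire_dist a b.
Proof.
  intro H. destruct (baire_dist_cases a b) as [[_ Hall]|[q [-> [_ Lq]]]].
  - contradiction (H (Hall p)).
  - apply inv_succ_le. destruct (le_lt_dec q p) as [Hle|Hlt]; [exact Hle|].
    contradiction (H (Lq p Hlt)).
Qed.

Lemma baire_dist_triangle a b c : baire_dist a c <= baire_dist a b + baire_dist b c.
Proof.
  pose proof (baire_dist_ge0 a b). pose proof (baire_dist_ge0 b c).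
  destruct (baire_dist_cases a c) as [[-> _]|[p [-> [Hp _]]]]; [lra|].
  destruct (Nat.eq_dec (a p) (b p)) as [Hab|Hab].
  - assert (Hbc : b p <> c p) by congruence.
    pose proof (baire_dist_ge b c p Hbc). lra.
  - pose proof (baire_dist_ge a b p Hab). lra.
Qed.

Lemma baire_dist_lt a b m :
  (forall i, (i <= m)%nat -> a i = b i) <-> baire_dist a b < / INR (S m).
Proof.
  destruct (baire_dist_cases a b) as [[-> Hall]|[p [-> [Hp Lp]]]].
  - split; [intros _; apply inv_succ_pos | intros _ i _; apply Hall].
  - split.
    + intro Hagree. apply inv_succ_lt. destruct (le_lt_dec p m) as [Hle|Hlt]; [|exact Hlt].
      contradiction (Hp (Hagree p Hle)).
    + intros Hlt i Hi. apply Lp. destruct (le_lt_dec p m) as [Hle|Hpm]; [|lia].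
      pose proof (inv_succ_le p m Hle). lra.
Qed.

Lemma small_inv_succ eps : 0 < eps -> exists m, / INR (S m) < eps.
Proof.
  intro Heps. destruct (archimed_cor1 eps Heps) as [[|m] [Hm Hpos]]; [lia|]. now exists m.
Qed.

Lemma bound_on_prefix (f : nat -> nat) (M : nat) :
  exists n, forall i, (i < M)%nat -> (f i <= n)%nat.
Proof.
  induction M as [|M [n Hn]]; [exists 0%nat; lia|].
  exists (n + f M)%nat. intros i Hi.
  destruct (Nat.eq_dec i M) as [->|Hne]; [lia|]. specialize (Hn i ltac:(lia)). lia.
Qed.

Fixpoint prefix_code (a : nat -> nat) (m : nat) : nat :=
  match m with
  | 0 => 0
  | S m => S (Cantor.to_nat (a m, prefix_code a m))
  end.

Lemma prefix_code_inj a b m m' :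
  prefix_code a m = prefix_code b m' -> m = m' /\ forall i, (i < m)%nat -> a i = b i.
Proof.
  revert m'. induction m as [|m IH]; intros [|m'] H; cbn [prefix_code] in H; try discriminate.
  - split; [reflexivity | intros i Hi; lia].
  - apply Nat.succ_inj, Cantor.to_nat_inj in H. injection H as Hlast Hrest.
    destruct (IH m' Hrest) as [-> Hagree]. split; [reflexivity|].
    intros i Hi. destruct (Nat.eq_dec i m') as [->|Hne]; [exact Hlast|]. apply Hagree. lia.
Qed.

Section BaireCode.

Context {T : Type} (k : T -> nat -> nat).

Definition code_dist (s t : T) : R := baire_dist (k s) (k t).

Definition cylinder_open (V : T -> Prop) : Prop :=
  forall t, V t -> exists m, forall s, (forall i, (i < m)%nat -> k s i = k t i) -> V s.

Definition closed_code_image : Prop :=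
  forall L : nat -> nat, (forall M, exists t, forall i, (i < M)%nat -> k t i = L i) ->
  exists t, forall i, k t i = L i.

Hypothesis k_inj : forall s t, (forall i, k s i = k t i) -> s = t.

Lemma code_dist_metric : is_metric code_dist.
Proof.
  unfold code_dist. split; [|split; [|split]].
  - intros s t. apply baire_dist_ge0.
  - intros s t. rewrite baire_dist_eq0. split; [apply k_inj | intros ->; reflexivity].
  - intros s t. apply baire_dist_sym.
  - intros s t u. apply baire_dist_triangle.
Qed.

Lemma metric_open_code_dist V : metric_open code_dist V <-> cylinder_open V.
Proof.
  unfold code_dist. split.
  - intros HV t Vt. destruct (HV t Vt) as [eps [Heps Hball]].
    destruct (small_inv_succ eps Heps) as [m Hm]. exists (S m). intros s Hs.
    apply Hball. apply Rlt_trans with (/ INR (S m)); [|exact Hm].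
    apply baire_dist_lt. intros i Hi. symmetry. apply Hs. lia.
  - intros HV t Vt. destruct (HV t Vt) as [m Hm].
    exists (/ INR (S m)). split; [apply inv_succ_pos|]. intros s Hs.
    apply Hm. intros i Hi. symmetry. apply (proj2 (baire_dist_lt _ _ m) Hs). lia.
Qed.

Lemma code_dist_complete : closed_code_image -> metric_complete code_dist.
Proof.
  intros Hclosed s Hcauchy.
  assert (Hstab : forall i, exists N, forall n, (N <= n)%nat ->
                    forall i', (i' <= i)%nat -> k (s n) i' = k (s N) i').
  { intro i. destruct (Hcauchy _ (inv_succ_pos i)) as [N HN]. exists N. intros n Hn.
    apply baire_dist_lt. apply HN; lia. }
  destruct (choice _ Hstab) as [Nf HNf].
  set (L := fun i => k (s (Nf i)) i).
  assert (HL : forall i n, (Nf i <= n)%nat -> k (s n) i = L i).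
  { intros i n Hn. apply (HNf i n Hn). lia. }
  destruct (Hclosed L) as [t Ht].
  { intro M. destruct (bound_on_prefix Nf M) as [n Hn]. exists (s n).
    intros i Hi. apply HL, Hn, Hi. }
  exists t. intros eps Heps. destruct (small_inv_succ eps Heps) as [m Hm].
  destruct (bound_on_prefix Nf (S m)) as [n0 Hn0]. exists n0. intros n Hn.
  apply Rlt_trans with (/ INR (S m)); [|exact Hm].
  apply baire_dist_lt. intros i Hi. rewrite Ht. apply HL.
  specialize (Hn0 i ltac:(lia)). lia.
Qed.

Lemma cylinder_separable (sigma : opfam T) :
  (forall V, sigma V -> cylinder_open V) -> separable sigma.
Proof.
  intro Hcyl.
  (* the point enumerated at [n] realises the finite prefix coded by [n], if any *)
  pose (f := fun n => match excluded_middle_informative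
                              (exists t m, prefix_code (k t) m = n) with
                      | left H => Some (proj1_sig (constructive_indefinite_description _ H))
                      | right _ => None
                      end).
  exists (fun t => exists n, f n = Some t). split; [exists f; intros t Ht; exact Ht|].
  intros V HV [t Vt]. destruct (Hcyl V HV t Vt) as [m Hm].
  set (n := prefix_code (k t) m).
  assert (Hf : exists t', f n = Some t' /\ exists m', prefix_code (k t') m' = n).
  { unfold f. destruct (excluded_middle_informative _) as [H|H].
    - destruct (constructive_indefinite_description _ H) as [t' Ht'].
      exists t'. split; [reflexivity | exact Ht'].
    - contradiction H. exists t, m. reflexivity. }
  destruct Hf as [t' [Hft' [m' Hm']]].
  destruct (prefix_code_inj _ _ _ _ Hm') as [-> Hagree].
  exists t'. split; [apply Hm, Hagree | eauto].
Qed.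

Lemma polish_of_closed_code (sigma : opfam T) :
  closed_code_image -> (forall V, sigma V <-> cylinder_open V) -> polish sigma.
Proof.
  intros Hclosed Hsigma. split.
  - apply cylinder_separable. intros V HV. apply Hsigma, HV.
  - exists code_dist. split; [exact code_dist_metric|].
    split; [exact (code_dist_complete Hclosed)|].
    intro V. rewrite Hsigma. symmetry. apply metric_open_code_dist.
Qed.

End BaireCode.

(** * The Sierpinski cube and generated topologies *)

Local Open Scope nat_scope.

Definition in_mask (G i : nat) : Prop := Nat.testbit G i = true.

Definition mask_sub (G G' : nat) : Prop := forall i, in_mask G i -> in_mask G' i.

Lemma not_in_mask_0 i : ~ in_mask 0 i.
Proof. unfold in_mask. rewrite Nat.bits_0. discriminate. Qed.

Lemma in_mask_lor G G' i : in_mask (Nat.lor G G') i <-> in_mask G i \/ in_mask G' i.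
Proof. unfold in_mask. rewrite Nat.lor_spec, Bool.orb_true_iff. reflexivity. Qed.

Lemma mask_of_list (l : list nat) : exists G, forall i, in_mask G i <-> In i l.
Proof.
  induction l as [|a l [G HG]].
  - exists 0. intro i. split; [apply not_in_mask_0 | intros []].
  - exists (Nat.setbit G a). intro i. unfold in_mask in *.
    rewrite Nat.setbit_iff, HG. simpl. tauto.
Qed.

Lemma in_mask_lt G i : in_mask G i -> i < G.
Proof.
  unfold in_mask. intro H. destruct (le_lt_dec i (Nat.log2 G)) as [Hle|Hlt].
  - destruct (Nat.eq_dec G 0) as [->|HG]; [rewrite Nat.bits_0 in H; discriminate|].
    pose proof (Nat.log2_lt_lin G). lia.
  - rewrite Nat.bits_above_log2 in H by exact Hlt. discriminate.
Qed.

Lemma list_of_mask (G : nat) : exists l : list nat, forall i, in_mask G i <-> In i l.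
Proof.
  exists (filter (Nat.testbit G) (seq 0 G)). intro i.
  rewrite filter_In, in_seq. split; [|tauto].
  intro H. pose proof (in_mask_lt G i H). split; [lia | exact H].
Qed.

Definition sier_basic (G : nat) (a : nat -> bool) : Prop :=
  forall i, in_mask G i -> a i = true.

Lemma sier_open_basic G : sier_open (sier_basic G).
Proof.
  intros a Ha. destruct (list_of_mask G) as [l Hl]. exists l.
  split.
  - intros i Hi. apply Ha, Hl, Hi.
  - intros b Hb i Hi. apply Hb, Hl, Hi.
Qed.

Lemma sier_open_basic_nbhd V a :
  sier_open V -> V a -> exists G, sier_basic G a /\ forall b, sier_basic G b -> V b.
Proof.
  intros HV Va. destruct (HV a Va) as [l [Hal Hl]]. destruct (mask_of_list l) as [G HG].
  exists G. split.
  - intros i Hi. apply Hal, HG, Hi.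
  - intros b Hb. apply Hl. intros i Hi. apply Hb, HG, Hi.
Qed.

Lemma sier_topology : is_topology sier_open.
Proof.
  split; [|split].
  - intros a _. exists nil. simpl. tauto.
  - intros V V' HV HV' a [Va Va'].
    destruct (HV a Va) as [l [Hal Hl]]. destruct (HV' a Va') as [l' [Hal' Hl']].
    exists (l ++ l'). split.
    + intros i Hi. apply in_app_or in Hi. destruct Hi; auto.
    + intros b Hb. split; [apply Hl | apply Hl']; intros i Hi; apply Hb, in_or_app; auto.
  - intros I V HV a [i Va]. destruct (HV i a Va) as [l [Hal Hl]].
    exists l. split; [exact Hal|]. intros b Hb. exists i. apply Hl, Hb.
Qed.

Lemma pullback_topology {X Y : Type} (S : opfam Y) (h : X -> Y) (tau : opfam X) :
  is_topology S -> (forall V, tau V <-> exists V', S V' /\ forall x, V x <-> V' (h x)) ->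
  is_topology tau.
Proof.
  intros [S_full [S_inter S_union]] Htau. split; [|split].
  - apply Htau. exists (fun _ => True). split; [exact S_full | tauto].
  - intros V1 V2 H1 H2. apply Htau in H1 as [V1' [H1 E1]]. apply Htau in H2 as [V2' [H2 E2]].
    apply Htau. exists (fun y => V1' y /\ V2' y). split; [apply S_inter; assumption|].
    intro x. rewrite E1, E2. reflexivity.
  - intros I V HV. apply Htau.
    set (J := {p : I * (Y -> Prop) | S (snd p) /\ forall x, V (fst p) x <-> snd p (h x)}).
    exists (fun y => exists p : J, snd (proj1_sig p) y). split.
    + apply S_union. intros [p Hp]. exact (proj1 Hp).
    + intro x. split.
      * intros [i Vix]. destruct (proj1 (Htau (V i)) (HV i)) as [V' HV'].
        exists (exist _ (i, V') HV'). apply (proj2 HV'), Vix.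
      * intros [[[i V'] HV'] Hx]. exists i. apply (proj2 HV'), Hx.
Qed.

Lemma opfam_ext {Y : Type} (T : opfam Y) (V V' : Y -> Prop) :
  T V -> (forall y, V y <-> V' y) -> T V'.
Proof.
  intros HV Heq. replace V' with V; [exact HV|].
  apply functional_extensionality. intro y. apply propositional_extensionality, Heq.
Qed.

Lemma gen_top_topology {Y : Type} (S : opfam Y) : is_topology (gen_top S).
Proof.
  split; [|split].
  - intros T HT _. apply HT.
  - intros V V' HV HV' T HT HS. apply HT; [apply HV | apply HV']; assumption.
  - intros I V HV T HT HS. apply HT. intro i. apply HV; assumption.
Qed.

Lemma gen_top_incl {Y : Type} (S : opfam Y) V : S V -> gen_top S V.
Proof. intros HV T _ HS. apply HS, HV. Qed.

Definition adjoin_closed {Y : Type} (tau : opfam Y) (C : nat -> Y -> Prop) : opfam Y :=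
  gen_top (fun V => tau V \/ exists n, V = C n).

Lemma adjoin_closed_local {Y : Type} (tau : opfam Y) (C : nat -> Y -> Prop) V :
  is_topology tau -> adjoin_closed tau C V ->
  forall y, V y -> exists O ls, tau O /\ O y /\ (forall l, In l ls -> C l y) /\
    forall z, O z -> (forall l, In l ls -> C l z) -> V z.
Proof.
  intros [tau_full [tau_inter _]] HV. apply HV; clear V HV.
  - split; [|split].
    + intros y _. exists (fun _ => True), nil. simpl. tauto.
    + intros V1 V2 H1 H2 y [V1y V2y].
      destruct (H1 y V1y) as [O1 [l1 [HO1 [O1y [Hl1 HV1]]]]].
      destruct (H2 y V2y) as [O2 [l2 [HO2 [O2y [Hl2 HV2]]]]].
      exists (fun z => O1 z /\ O2 z), (l1 ++ l2).
      split; [apply tau_inter; assumption|]. split; [tauto|]. split.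
      * intros l Hl. apply in_app_or in Hl. destruct Hl; auto.
      * intros z [O1z O2z] Hz.
        split; [apply HV1 | apply HV2]; auto; intros l Hl; apply Hz, in_or_app; auto.
    + intros I V HV y [i Viy]. destruct (HV i y Viy) as [O [l [HO [Oy [Hl HVi]]]]].
      exists O, l. repeat split; auto. intros z Oz Hz. exists i. auto.
  - intros V [HV|[n ->]] y Vy.
    + exists V, nil. simpl. tauto.
    + exists (fun _ => True), (n :: nil). simpl.
      split; [exact tau_full|]. split; [exact I|]. split.
      * intros l [<-|[]]. exact Vy.
      * intros z _ Hz. apply Hz. left. reflexivity.
Qed.

(** * Invariant basic open sets of a quasi-Polish space *)

Section QuasiPolish.

Variables (X : Type) (tau : opfam X) (E : X -> X -> Prop) (h : X -> nat -> bool).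
Variables (A : (nat -> bool) -> Prop) (U F : nat -> (nat -> bool) -> Prop).

Hypothesis U_open : forall n, sier_open (U n).
Hypothesis F_closed : forall n, sier_open (complementS (F n)).
Hypothesis A_Pi02 : forall a, A a <-> forall n, U n a \/ F n a.
Hypothesis A_image : forall a, A a <-> exists x, h x = a.
Hypothesis tau_embed : forall V, tau V <-> exists V', sier_open V' /\ forall x, V x <-> V' (h x).
Hypothesis E_refl : forall x, E x x.
Hypothesis E_sym : forall x y, E x y -> E y x.
Hypothesis E_trans : forall x y z, E x y -> E y z -> E x z.
Hypothesis saturation_open : forall V, tau V -> tau (saturation E V).

Definition basic (G : nat) (x : X) : Prop := sier_basic G (h x).

Definition sat_basic (G : nat) : X -> Prop := saturation E (basic G).

Definition pattern (x : X) (G : nat) : Prop := sat_basic G x.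

Lemma tau_topology : is_topology tau.
Proof. exact (pullback_topology _ h tau sier_topology tau_embed). Qed.

Lemma basic_open G : tau (basic G).
Proof.
  apply tau_embed. exists (sier_basic G). split; [apply sier_open_basic | reflexivity].
Qed.

Lemma basic_nbhd V x : tau V -> V x -> exists G, basic G x /\ forall y, basic G y -> V y.
Proof.
  intros HV Vx. apply tau_embed in HV as [V' [HV' Heq]].
  destruct (sier_open_basic_nbhd V' (h x) HV') as [G [HG Hsub]]; [apply Heq, Vx|].
  exists G. split; [exact HG|]. intros y Hy. apply Heq, Hsub, Hy.
Qed.

Lemma sat_basic_open G : tau (sat_basic G).
Proof. apply saturation_open, basic_open. Qed.

Lemma sat_basic_inv G x y : sat_basic G x -> E x y -> sat_basic G y.
Proof. intros [z [Bz Ezx]] Exy. exists z. split; [exact Bz | eapply E_trans; eauto]. Qed.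

Lemma basic_sat_basic G x : basic G x -> sat_basic G x.
Proof. intro Bx. exists x. split; [exact Bx | apply E_refl]. Qed.

Lemma sat_basic_0 x : sat_basic 0 x.
Proof. apply basic_sat_basic. intros i Hi. contradiction (not_in_mask_0 i). Qed.

Lemma sat_basic_least G (V : X -> Prop) :
  (forall y, basic G y -> V y) -> (forall x y, V x -> E x y -> V y) ->
  forall y, sat_basic G y -> V y.
Proof. intros HB HV y [z [Bz Ezy]]. exact (HV z y (HB z Bz) Ezy). Qed.

Lemma sat_basic_lor G G' x :
  basic G x -> basic G' x -> sat_basic (Nat.lor G G') x.
Proof.
  intros BG BG'. apply basic_sat_basic. intros i Hi.
  apply in_mask_lor in Hi as [Hi|Hi]; [apply BG | apply BG']; exact Hi.
Qed.

Definition sat_compl (n : nat) : X -> Prop := complementS (sat_basic n).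

Definition tau_plus : opfam X := adjoin_closed tau sat_compl.

Lemma tau_plus_incl V : tau V -> tau_plus V.
Proof. intro HV. apply gen_top_incl. left. exact HV. Qed.

Lemma sat_compl_open n : tau_plus (sat_compl n).
Proof. apply gen_top_incl. right. exists n. reflexivity. Qed.

Lemma closure_tau x z : closureT tau (E x) z <-> forall G, pattern z G -> pattern x G.
Proof.
  split.
  - intros Hcl G Hz. destruct (Hcl _ (sat_basic_open G) Hz) as [y [Hy Exy]].
    exact (sat_basic_inv G y x Hy (E_sym _ _ Exy)).
  - intros Hpat V HV Vz. destruct (basic_nbhd V z HV Vz) as [G [Bz Hsub]].
    destruct (Hpat G (basic_sat_basic G z Bz)) as [y [By Eyx]].
    exists y. split; [apply Hsub, By | apply E_sym, Eyx].
Qed.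

Lemma closure_tau_plus x z :
  closureT tau_plus (E x) z <-> forall G, pattern z G <-> pattern x G.
Proof.
  split.
  - intros Hcl G. split.
    + intro Hz. destruct (Hcl _ (tau_plus_incl _ (sat_basic_open G)) Hz) as [y [Hy Exy]].
      exact (sat_basic_inv G y x Hy (E_sym _ _ Exy)).
    + intro Hx. apply NNPP. intro Hz.
      destruct (Hcl _ (sat_compl_open G) Hz) as [y [Hy Exy]].
      exact (Hy (sat_basic_inv G x y Hx Exy)).
  - intros Hpat V HV Vz.
    destruct (adjoin_closed_local tau sat_compl V tau_topology HV z Vz)
      as [O [ls [HO [Oz [Hls HOV]]]]].
    destruct (basic_nbhd O z HO Oz) as [G [Bz Hsub]].
    destruct (proj1 (Hpat G) (basic_sat_basic G z Bz)) as [y [By Eyx]].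
    exists y. split; [|apply E_sym, Eyx]. apply HOV; [apply Hsub, By|].
    intros l Hl Hy. apply (Hls l Hl), Hpat. exact (sat_basic_inv l y x Hy Eyx).
Qed.

Lemma approx_tau_iff x y : approxE tau E x y <-> forall G, pattern x G <-> pattern y G.
Proof.
  unfold approxE. split.
  - intros Heq G.
    assert (Hx : closureT tau (E x) x) by (apply closure_tau; auto).
    assert (Hy : closureT tau (E y) y) by (apply closure_tau; auto).
    rewrite Heq in Hx. rewrite <- Heq in Hy. rewrite closure_tau in Hx, Hy. split; auto.
  - intro Hpat. apply functional_extensionality. intro z.
    apply propositional_extensionality. rewrite !closure_tau.
    split; intros H G Hz; apply Hpat, H, Hz.
Qed.

Lemma approx_tau_plus_iff x y :
  approxE tau_plus E x y <-> forall G, pattern x G <-> pattern y G.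
Proof.
  unfold approxE. split.
  - intros Heq G.
    assert (Hx : closureT tau_plus (E x) x) by (apply closure_tau_plus; tauto).
    rewrite Heq, closure_tau_plus in Hx. apply Hx.
  - intro Hpat. apply functional_extensionality. intro z.
    apply propositional_extensionality. rewrite !closure_tau_plus.
    split; intros H G; rewrite H; [|symmetry]; apply Hpat.
Qed.

(** * Requirements and admissible patterns *)

(* Even kinds [m = 2 n] force the limit point of the
   construction below into [U n] or [F n], i.e. into [A]; odd kinds [m = 2 n + 1] force it
   into [sat_basic n] whenever the prescribed pattern contains [n]. *)
Definition req (G m : nat) : nat := Cantor.to_nat (G, m).

Definition req_base (j : nat) : nat := fst (Cantor.of_nat j).

Definition req_kind (j : nat) : nat + nat :=
  let m := snd (Cantor.of_nat j) in
  if Nat.even m then inl (Nat.div2 m) else inr (Nat.div2 m).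

Definition req_target (j : nat) : nat :=
  match req_kind j with inl _ => req_base j | inr n => n end.

Definition req_applicable (j : nat) : Prop :=
  match req_kind j with
  | inl n => forall a, sier_basic (req_base j) a -> ~ F n a
  | inr _ => True
  end.

Definition req_met (j k : nat) : Prop :=
  mask_sub (req_base j) k /\
  match req_kind j with
  | inl n => forall a, sier_basic k a -> U n a
  | inr n => forall z, sat_basic k z -> sat_basic n z
  end.

Definition req_triggered (P : nat -> Prop) (j : nat) : Prop :=
  req_applicable j /\ P (req_base j) /\ P (req_target j).

Definition admissible (P : nat -> Prop) : Prop :=
  P 0 /\
  (forall G G', P G -> (forall z, sat_basic G z -> sat_basic G' z) -> P G') /\
  (forall j, req_triggered P j -> exists k, req_met j k /\ P k).

Lemma req_base_req G m : req_base (req G m) = G.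
Proof. unfold req_base, req. rewrite Cantor.cancel_of_to. reflexivity. Qed.

Lemma req_kind_even G n : req_kind (req G (2 * n)) = inl n.
Proof.
  unfold req_kind, req. rewrite Cantor.cancel_of_to. cbn [snd].
  rewrite Nat.even_even, Nat.div2_double. reflexivity.
Qed.

Lemma req_kind_odd G n : req_kind (req G (2 * n + 1)) = inr n.
Proof.
  unfold req_kind, req. rewrite Cantor.cancel_of_to. cbn [snd].
  rewrite Nat.even_odd, Nat.div2_odd'. reflexivity.
Qed.

Lemma req_met_exists x j :
  req_triggered (pattern x) j -> exists k, req_met j k /\ pattern x k.
Proof.
  unfold req_triggered, req_applicable, req_met, req_target.
  intros [Happ [[x' [Bx' Ex'x]] Htarget]].
  destruct (req_kind j) as [n|n].
  - (* [h x'] lies in [A] and avoids [F n], so it lies in the open set [U n] *)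
    assert (HUn : U n (h x')).
    { assert (Hx'A : A (h x')) by (apply A_image; eauto).
      destruct (proj1 (A_Pi02 _) Hx'A n) as [HU|HF]; [exact HU|].
      contradiction (Happ (h x') Bx' HF). }
    destruct (sier_open_basic_nbhd _ _ (U_open n) HUn) as [G [BG HG]].
    exists (Nat.lor (req_base j) G). split; [split|].
    + intros i Hi. apply in_mask_lor. left. exact Hi.
    + intros a Ha. apply HG. intros i Hi. apply Ha, in_mask_lor. right. exact Hi.
    + apply (sat_basic_inv _ x' x); [apply sat_basic_lor|]; assumption.
  - assert (Hx' : sat_basic n x') by exact (sat_basic_inv n x x' Htarget (E_sym _ _ Ex'x)).
    destruct (basic_nbhd _ _ (sat_basic_open n) Hx') as [G [BG HG]].
    exists (Nat.lor (req_base j) G). split; [split|].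
    + intros i Hi. apply in_mask_lor. left. exact Hi.
    + apply sat_basic_least.
      * intros y Hy. apply HG. intros i Hi. apply Hy, in_mask_lor. right. exact Hi.
      * intros y z Hy Eyz. exact (sat_basic_inv n y z Hy Eyz).
    + apply (sat_basic_inv _ x' x); [apply sat_basic_lor|]; assumption.
Qed.

Lemma pattern_admissible x : admissible (pattern x).
Proof.
  split; [apply sat_basic_0|]. split; [|apply req_met_exists].
  intros G G' HG Hsub. apply Hsub, HG.
Qed.

(** * Realising admissible patterns *)

Section Realization.

Variable P : nat -> Prop.
Hypothesis P_admissible : admissible P.

(* Stage [s] serves the requirement of kind [fst (of_nat s)] based at the current mask,
   so every kind is served at arbitrarily late stages. *)
Definition stage_req (s G : nat) : nat := req G (fst (Cantor.of_nat s)).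

Definition extends (s G G' : nat) : Prop :=
  mask_sub G G' /\ P G' /\
  (req_applicable (stage_req s G) -> P (req_target (stage_req s G)) ->
   req_met (stage_req s G) G').

Fixpoint stage (s : nat) : nat :=
  match s with
  | 0 => 0
  | S s => epsilon (inhabits 0) (extends s (stage s))
  end.

Lemma extends_ex s G : P G -> exists G', extends s G G'.
Proof.
  intro HG. destruct P_admissible as [_ [_ P_req]].
  set (j := stage_req s G).
  assert (Hbase : req_base j = G) by apply req_base_req.
  destruct (classic (req_applicable j /\ P (req_target j))) as [[Happ Htarget]|Hno].
  - destruct (P_req j) as [k [Hmet Pk]].
    { split; [exact Happ|]. rewrite Hbase. split; assumption. }
    exists k. split; [|split; [exact Pk | intros; exact Hmet]].
    rewrite <- Hbase. exact (proj1 Hmet).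
  - exists G. split; [intros i Hi; exact Hi|]. split; [exact HG|].
    intros Happ Htarget. contradiction Hno. split; assumption.
Qed.

Lemma stage_spec s : P (stage s) /\ extends s (stage s) (stage (S s)).
Proof.
  induction s as [|s [_ Hext]].
  - split; [exact (proj1 P_admissible)|].
    exact (epsilon_spec _ _ (extends_ex _ _ (proj1 P_admissible))).
  - split; [exact (proj1 (proj2 Hext))|].
    exact (epsilon_spec _ _ (extends_ex _ _ (proj1 (proj2 Hext)))).
Qed.

Lemma stage_mono s s' : s <= s' -> mask_sub (stage s) (stage s').
Proof.
  induction 1 as [|s' _ IH]; intros i Hi; [exact Hi|].
  apply (proj1 (proj2 (stage_spec s'))), IH, Hi.
Qed.

Lemma stage_met s G m :
  fst (Cantor.of_nat s) = m -> stage s = G ->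
  req_applicable (req G m) -> P (req_target (req G m)) -> req_met (req G m) (stage (S s)).
Proof.
  intros Hm HG. destruct (stage_spec s) as [_ [_ [_ Hmet]]].
  unfold stage_req in Hmet. rewrite Hm, HG in Hmet. exact Hmet.
Qed.

Lemma stage_of_kind m s0 : exists s, s0 <= s /\ fst (Cantor.of_nat s) = m.
Proof.
  exists (Cantor.to_nat (m, s0)). split.
  - pose proof (Cantor.to_nat_non_decreasing m s0). lia.
  - rewrite Cantor.cancel_of_to. reflexivity.
Qed.

Definition limit_point (i : nat) : bool :=
  if excluded_middle_informative (exists s, in_mask (stage s) i) then true else false.

Lemma limit_point_basic s : sier_basic (stage s) limit_point.
Proof.
  intros i Hi. unfold limit_point.
  destruct (excluded_middle_informative _) as [_|Hno]; [reflexivity|].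
  contradiction Hno. exists s. exact Hi.
Qed.

Lemma limit_point_basic_inv G : sier_basic G limit_point -> exists s, mask_sub G (stage s).
Proof.
  intro HG. destruct (list_of_mask G) as [l Hl].
  cut (exists s, forall i, In i l -> in_mask (stage s) i).
  { intros [s Hs]. exists s. intros i Hi. apply Hs, Hl, Hi. }
  assert (Hlim : forall i, In i l -> limit_point i = true) by (intros i Hi; apply HG, Hl, Hi).
  clear HG Hl. induction l as [|a l IH].
  - exists 0. intros i [].
  - destruct IH as [s1 Hs1]; [intros i Hi; apply Hlim; right; exact Hi|].
    assert (Ha : limit_point a = true) by (apply Hlim; left; reflexivity).
    unfold limit_point in Ha.
    destruct (excluded_middle_informative _) as [[s2 Hs2]|]; [|discriminate].
    exists (s1 + s2). intros i [<-|Hi].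
    + apply (stage_mono s2); [lia | exact Hs2].
    + apply (stage_mono s1); [lia | apply Hs1, Hi].
Qed.

Lemma limit_point_in_A : A limit_point.
Proof.
  apply A_Pi02. intro n. destruct (classic (F n limit_point)) as [HF|HF]; [right; exact HF|left].
  destruct (sier_open_basic_nbhd _ _ (F_closed n) HF) as [H [HH HnotF]].
  destruct (limit_point_basic_inv H HH) as [s0 Hs0].
  destruct (stage_of_kind (2 * n) s0) as [s [Hs Hm]].
  pose proof (stage_met s (stage s) (2 * n) Hm eq_refl) as Hmet.
  unfold req_applicable, req_target, req_met in Hmet.
  rewrite req_kind_even, req_base_req in Hmet.
  assert (Happ : forall a, sier_basic (stage s) a -> ~ F n a).
  { intros a Ha. apply HnotF. intros i Hi. apply Ha, (stage_mono s0 s Hs), Hs0, Hi. }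
  apply (proj2 (Hmet Happ (proj1 (stage_spec s)))), limit_point_basic.
Qed.

Lemma admissible_realized : exists x, forall G, pattern x G <-> P G.
Proof.
  destruct (proj1 (A_image limit_point) limit_point_in_A) as [x Hx].
  destruct P_admissible as [_ [P_up _]].
  exists x. intro G. split.
  - intro HG. destruct (basic_nbhd _ _ (sat_basic_open G) HG) as [H [HH Hsub]].
    unfold basic in HH. rewrite Hx in HH. destruct (limit_point_basic_inv H HH) as [s Hs].
    apply (P_up (stage s)); [apply stage_spec|].
    apply sat_basic_least; [|exact (sat_basic_inv G)].
    intros y Hy. apply Hsub. intros i Hi. apply Hy, Hs, Hi.
  - intro HG. destruct (stage_of_kind (2 * G + 1) 0) as [s [_ Hm]].
    pose proof (stage_met s (stage s) (2 * G + 1) Hm eq_refl) as Hmet.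
    unfold req_applicable, req_target, req_met in Hmet.
    rewrite req_kind_odd in Hmet.
    apply (proj2 (Hmet I HG)), basic_sat_basic. unfold basic. rewrite Hx.
    apply limit_point_basic.
Qed.

End Realization.

(** * Coding patterns into Baire space *)

Definition least_witness (P : nat -> Prop) (j k : nat) : Prop :=
  req_triggered P j /\ req_met j k /\ P k /\ forall k', k' < k -> ~ (req_met j k' /\ P k').

(* [0] encodes "no least witness"; [S k] encodes the least witness [k]. *)
Definition witness (P : nat -> Prop) (j : nat) : nat :=
  match excluded_middle_informative (exists k, least_witness P j k) with
  | left H => S (epsilon (inhabits 0) (least_witness P j))
  | right _ => 0
  end.

Definition indicator (p : Prop) : nat := if excluded_middle_informative p then 1 else 0.

Definition code (P : nat -> Prop) (i : nat) : nat :=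
  if Nat.even i then indicator (P (Nat.div2 i)) else witness P (Nat.div2 i).

Lemma least_witness_unique P j k k' : least_witness P j k -> least_witness P j k' -> k = k'.
Proof.
  intros [_ [M [Pk L]]] [_ [M' [Pk' L']]].
  destruct (lt_eq_lt_dec k k') as [[Hlt|Heq]|Hlt]; [| exact Heq |];
    exfalso; [apply (L' k) | apply (L k')]; auto.
Qed.

Lemma least_witness_ex P j :
  admissible P -> req_triggered P j -> exists k, least_witness P j k.
Proof.
  intros [_ [_ P_req]] Htrig. destruct (ex_least_nat _ (P_req j Htrig)) as [k [[M Pk] L]].
  exists k. split; [exact Htrig|]. split; [exact M|]. split; [exact Pk | exact L].
Qed.

Lemma witness_spec P j k : least_witness P j k -> witness P j = S k.
Proof.
  intro Hk. unfold witness. destruct (excluded_middle_informative _) as [Hex|Hno].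
  - f_equal. apply (least_witness_unique P j); [apply epsilon_spec, Hex | exact Hk].
  - contradiction Hno. exists k. exact Hk.
Qed.

Lemma witness_untriggered P j : ~ req_triggered P j -> witness P j = 0.
Proof.
  intro Hno. unfold witness. destruct (excluded_middle_informative _) as [[k [Ht _]]|_].
  - contradiction (Hno Ht).
  - reflexivity.
Qed.

Lemma indicator_iff (p q : Prop) : (p <-> q) -> indicator p = indicator q.
Proof.
  intro Hpq. unfold indicator.
  destruct (excluded_middle_informative p), (excluded_middle_informative q); tauto.
Qed.

Lemma indicator_one (p : Prop) : indicator p = 1 <-> p.
Proof.
  unfold indicator. destruct (excluded_middle_informative p); split; auto; try discriminate.
  intro. contradiction.
Qed.

Lemma code_even P G : code P (2 * G) = indicator (P G).
Proof. unfold code. rewrite Nat.even_even, Nat.div2_double. reflexivity. Qed.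

Lemma code_odd P j : code P (2 * j + 1) = witness P j.
Proof. unfold code. rewrite Nat.even_odd, Nat.div2_odd'. reflexivity. Qed.

Lemma code_ext P Q : (forall G, P G <-> Q G) -> code P = code Q.
Proof.
  intro Heq. replace Q with P; [reflexivity|].
  apply functional_extensionality. intro G. apply propositional_extensionality, Heq.
Qed.

Lemma code_prefix_pattern P Q N :
  (forall i, i < 2 * N -> code P i = code Q i) -> forall G, G < N -> (P G <-> Q G).
Proof.
  intros Hcode G HG. rewrite <- (indicator_one (P G)), <- (indicator_one (Q G)).
  rewrite <- !code_even, Hcode by lia. reflexivity.
Qed.

Lemma code_local P i :
  admissible P ->
  exists N, forall Q, (forall G, G < N -> (Q G <-> P G)) -> code Q i = code P i.
Proof.
  intro HP. unfold code. destruct (Nat.even i); set (j := Nat.div2 i).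
  - exists (S j). intros Q HQ. apply indicator_iff, HQ. lia.
  - destruct (classic (req_triggered P j)) as [Htrig|Hno].
    + destruct (least_witness_ex P j HP Htrig) as [k Hk].
      exists (S (req_base j + req_target j + k)). intros Q HQ.
      rewrite (witness_spec P j k Hk). apply witness_spec.
      destruct Hk as [[Happ [Pb Pt]] [Hmet [Pk Hleast]]].
      split; [split; [exact Happ|]; split; apply HQ; [lia | exact Pb | lia | exact Pt]|].
      split; [exact Hmet|]. split; [apply HQ; [lia | exact Pk]|].
      intros k' Hk' [Hmet' Qk']. apply (Hleast k' Hk'). split; [exact Hmet'|].
      apply HQ; [lia | exact Qk'].
    + exists (S (req_base j + req_target j)). intros Q HQ.
      rewrite !witness_untriggered; [reflexivity | exact Hno|].
      intros [Happ [Qb Qt]]. apply Hno. split; [exact Happ|].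
      split; apply HQ; [lia | exact Qb | lia | exact Qt].
Qed.

Lemma code_local_prefix P m :
  admissible P ->
  exists N, forall Q, (forall G, G < N -> (Q G <-> P G)) ->
    forall i, i < m -> code Q i = code P i.
Proof.
  intro HP. induction m as [|m [N IH]].
  - exists 0. intros Q _ i Hi. lia.
  - destruct (code_local P m HP) as [N' HN']. exists (N + N'). intros Q HQ i Hi.
    destruct (Nat.eq_dec i m) as [->|Hne].
    + apply HN'. intros G HG. apply HQ. lia.
    + apply IH; [|lia]. intros G HG. apply HQ. lia.
Qed.

Lemma code_closed (L : nat -> nat) :
  (forall M, exists Q, admissible Q /\ forall i, i < M -> code Q i = L i) ->
  exists P, admissible P /\ forall i, code P i = L i.
Proof.
  intro Happrox. set (P := fun G => L (2 * G) = 1).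
  assert (Happrox' : forall M, exists Q, admissible Q /\ (forall i, i < M -> code Q i = L i) /\
                       forall G, 2 * G < M -> (Q G <-> P G)).
  { intro M. destruct (Happrox M) as [Q [HQ HQL]]. exists Q. split; [exact HQ|].
    split; [exact HQL|]. intros G HG. unfold P.
    rewrite <- (HQL _ HG), code_even. symmetry. apply indicator_one. }
  assert (HP : admissible P).
  { split; [|split].
    - destruct (Happrox' 1) as [Q [[Q0 _] [_ HQP]]]. apply HQP; [lia | exact Q0].
    - intros G G' HG Hsub. destruct (Happrox' (2 * (G + G') + 2)) as [Q [[_ [Q_up _]] [_ HQP]]].
      apply HQP; [lia|]. apply (Q_up G); [apply HQP; [lia | exact HG] | exact Hsub].
    - intros j [Happ [Pb Pt]]. set (v := L (2 * j + 1)).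
      destruct (Happrox' (2 * (req_base j + req_target j + j + v) + 2))
        as [Q [HQ [HQL HQP]]].
      assert (Htrig : req_triggered Q j).
      { split; [exact Happ|]. split; apply HQP; [lia | exact Pb | lia | exact Pt]. }
      destruct (least_witness_ex Q j HQ Htrig) as [k Hk].
      (* the witness coordinate of [L] bounds [k], so [P k] is already decided by [Q] *)
      assert (Hv : S k = v).
      { rewrite <- (witness_spec Q j k Hk), <- code_odd. apply HQL. lia. }
      destruct Hk as [_ [Hmet [Qk _]]]. exists k. split; [exact Hmet|].
      apply HQP; [lia | exact Qk]. }
  exists P. split; [exact HP|]. intro i.
  destruct (code_local P i HP) as [N HN].
  destruct (Happrox' (2 * N + i + 1)) as [Q [_ [HQL HQP]]].
  rewrite <- (HQL i) by lia. symmetry. apply HN. intros G HG. apply HQP. lia.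
Qed.

(** * The quotient [X//E] for the enlarged topology *)

Definition qp (x : X) : qtype tau_plus E := qproj tau_plus E x.

Lemma qp_eq_iff x y : qp x = qp y <-> forall G, pattern x G <-> pattern y G.
Proof.
  rewrite <- approx_tau_plus_iff. split.
  - intro Hq. apply (f_equal (@proj1_sig _ _)) in Hq. simpl in Hq.
    change (approx_class tau_plus E x y). rewrite Hq. reflexivity.
  - intro Happrox. unfold qp, qproj. apply eq_sig_hprop; [intros; apply proof_irrelevance|].
    simpl. apply functional_extensionality. intro z. apply propositional_extensionality.
    unfold approx_class, approxE in *. rewrite Happrox. reflexivity.
Qed.

Lemma qp_surj (q : qtype tau_plus E) : exists x, q = qp x.
Proof.
  destruct q as [C [x ->]]. exists x. unfold qp, qproj.
  apply eq_sig_hprop; [intros; apply proof_irrelevance | reflexivity].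
Qed.

Lemma qp_E x y : E x y -> qp x = qp y.
Proof.
  intro Exy. apply qp_eq_iff. intro G. split; intro HG; eapply sat_basic_inv; eauto.
Qed.

Definition class_pattern (q : qtype tau_plus E) (G : nat) : Prop :=
  exists x, q = qp x /\ pattern x G.

Definition class_code (q : qtype tau_plus E) : nat -> nat := code (class_pattern q).

Lemma class_code_qp x : class_code (qp x) = code (pattern x).
Proof.
  apply code_ext. intro G. split.
  - intros [y [Hxy Hy]]. apply (qp_eq_iff y x); [symmetry; exact Hxy | exact Hy].
  - intro Hx. exists x. split; [reflexivity | exact Hx].
Qed.

Lemma class_code_inj q q' : (forall i, class_code q i = class_code q' i) -> q = q'.
Proof.
  destruct (qp_surj q) as [x ->], (qp_surj q') as [x' ->].
  rewrite !class_code_qp. intro Hcode. apply qp_eq_iff. intro G.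
  apply (code_prefix_pattern _ _ (S G)); [intros i _; apply Hcode | lia].
Qed.

Lemma class_code_closed : closed_code_image class_code.
Proof.
  intros L Happrox. destruct (code_closed L) as [P [HP HPL]].
  - intro M. destruct (Happrox M) as [q Hq]. destruct (qp_surj q) as [x ->].
    exists (pattern x). split; [apply pattern_admissible|].
    rewrite <- class_code_qp. exact Hq.
  - destruct (admissible_realized P HP) as [x Hx]. exists (qp x). intro i.
    rewrite class_code_qp, (code_ext _ _ Hx). apply HPL.
Qed.

Lemma pattern_cylinder_open x N :
  tau_plus (fun y => forall G, G < N -> (pattern y G <-> pattern x G)).
Proof.
  destruct (gen_top_topology (fun V => tau V \/ exists n, V = sat_compl n))
    as [top_full [top_inter _]].
  induction N as [|N IH].
  - apply (opfam_ext _ _ _ top_full). intro y. split; [intros _ G HG; lia | trivial].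
  - set (V := if excluded_middle_informative (pattern x N) then sat_basic N else sat_compl N).
    assert (HV : tau_plus V).
    { unfold V. destruct (excluded_middle_informative _).
      - apply tau_plus_incl, sat_basic_open.
      - apply sat_compl_open. }
    apply (opfam_ext _ _ _ (top_inter _ _ IH HV)). intro y. unfold V, sat_compl, complementS.
    destruct (excluded_middle_informative (pattern x N)) as [HxN|HxN]; split.
    + intros [Hy HyN] G HG. destruct (Nat.eq_dec G N) as [->|]; [tauto | apply Hy; lia].
    + intro Hy. split; [intros G HG; apply Hy; lia | apply Hy; [lia | exact HxN]].
    + intros [Hy HyN] G HG. destruct (Nat.eq_dec G N) as [->|]; [tauto | apply Hy; lia].
    + intro Hy. split; [intros G HG; apply Hy; lia|]. intro HyN. apply HxN, Hy; [lia | exact HyN].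
Qed.

Lemma quot_open_cylinder V : quot_top tau_plus E V -> cylinder_open class_code V.
Proof.
  intros HV q Vq. destruct (qp_surj q) as [x ->].
  destruct (adjoin_closed_local tau sat_compl _ tau_topology HV x Vq)
    as [O [ls [HO [Ox [Hls HOV]]]]].
  destruct (basic_nbhd O x HO Ox) as [G [Bx HGO]].
  assert (Hls_max : forall l, In l ls -> l <= list_max ls)
    by (apply Forall_forall, list_max_le; reflexivity).
  exists (2 * (G + list_max ls + 1)). intros q' Hq'. destruct (qp_surj q') as [x' ->].
  rewrite !class_code_qp in Hq'.
  pose proof (code_prefix_pattern _ _ _ Hq') as Hagree.
  destruct (proj2 (Hagree G ltac:(lia)) (basic_sat_basic G x Bx)) as [y [By Eyx']].
  rewrite <- (qp_E y x' Eyx'). apply HOV; [apply HGO, By|].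
  intros l Hl Hyl. apply (Hls l Hl). apply Hagree; [specialize (Hls_max l Hl); lia|].
  exact (sat_basic_inv l y x' Hyl Eyx').
Qed.

Lemma cylinder_quot_open V : cylinder_open class_code V -> quot_top tau_plus E V.
Proof.
  intro HV. unfold quot_top.
  set (J := {p : X * nat | forall y,
              (forall G, G < snd p -> (pattern y G <-> pattern (fst p) G)) -> V (qp y)}).
  apply (opfam_ext _ (fun y => exists p : J,
           forall G, G < snd (proj1_sig p) -> (pattern y G <-> pattern (fst (proj1_sig p)) G))).
  { apply gen_top_topology. intro p. apply pattern_cylinder_open. }
  intro y. split.
  - intros [[p Hp] Hy]. exact (Hp y Hy).
  - intro Vy. destruct (HV (qp y) Vy) as [m Hm].
    destruct (code_local_prefix (pattern y) m (pattern_admissible y)) as [N HN].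
    assert (Hcyl : forall z, (forall G, G < N -> (pattern z G <-> pattern y G)) -> V (qp z)).
    { intros z Hz. apply Hm. intros i Hi. rewrite !class_code_qp. exact (HN _ Hz i Hi). }
    exists (exist _ (y, N) Hcyl). exact (fun G _ => iff_refl _).
Qed.

Lemma quotient_polish : polish (quot_top tau_plus E).
Proof.
  apply (polish_of_closed_code class_code class_code_inj); [exact class_code_closed|].
  intro V. split; [apply quot_open_cylinder | apply cylinder_quot_open].
Qed.

End QuasiPolish.

Theorem corollary2p4 (X : Type) (tau : opfam X) (E : X -> X -> Prop) :
  quasi_polish tau ->
  equivalence_rel E ->
  (forall U, tau U -> tau (saturation E U)) ->
  exists C : nat -> X -> Prop,
    (forall n, tau (complementS (C n))) /\
    (forall n x y, E x y -> C n x -> C n y) /\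
    (forall x y, approxE (gen_top (fun V => tau V \/ exists n, V = C n)) E x y
                 <-> approxE tau E x y) /\
    polish (quot_top (gen_top (fun V => tau V \/ exists n, V = C n)) E).
Proof.
  intros [A [h [[U [F [U_open [F_closed A_Pi02]]]] [_ [A_image tau_embed]]]]]
    [E_refl [E_sym E_trans]] saturation_open.
  exists (sat_compl X E h). split; [|split; [|split]].
  - intro n. apply (opfam_ext _ _ _ (sat_basic_open X tau E h tau_embed saturation_open n)).
    intro x. unfold sat_compl, complementS. split; [tauto | apply NNPP].
  - intros n x y Exy Hx Hy. exact (Hx (sat_basic_inv X E h E_trans n y x Hy (E_sym _ _ Exy))).
  - intros x y.
    rewrite (approx_tau_plus_iff X tau E h tau_embed E_refl E_sym E_trans saturation_open),
      (approx_tau_iff X tau E h tau_embed E_refl E_sym E_trans saturation_open).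
    reflexivity.
  - exact (quotient_polish X tau E h A U F U_open F_closed A_Pi02 A_image tau_embed
             E_refl E_sym E_trans saturation_open).
Qed.
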